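(* Let $q$ be a prime power, $\eta\ge0$ an integer, $(\delta_T,\delta_X)\in\mathbb{Z}\times\mathbb{N}$ with $\delta=\delta_T+\eta\delta_X\ge0$. Let $M=T_1^{c_1}T_2^{c_2}X_1^{d_1}X_2^{d_2}$ and $M'=T_1^{c'_1}T_2^{c'_2}X_1^{d'_1}X_2^{d'_2}$ be two monomials of bidegree $(\delta_T,\delta_X)$. Then $\mathrm{ev}_{(\delta_T,\delta_X)}(M)=\mathrm{ev}_{(\delta_T,\delta_X)}(M')$ if and only if, for all $i,j\in\{1,2\}$: $q-1$ divides $d_i-d'_i$; $q-1$ divides $c_j-c'_j$; $d_i=0\Leftrightarrow d'_i=0$; and $c_j=0\Leftrightarrow c'_j=0$.
   Context: $R=\mathbb{F}_q[T_1,T_2,X_1,X_2]$; the bidegree of $T_1^{c_1}T_2^{c_2}X_1^{d_1}X_2^{d_2}$ is $(c_1+c_2-\eta d_1,d_1+d_2)$; $R(\delta_T,\delta_X)$ is the span of monomials of bidegree $(\delta_T,\delta_X)$. The Hirzebruch surface $\mathcal{H}_\eta$ is the quotient of $(\mathbb{A}^2\setminus\{0\})^2$ by $\mathbb{G}_m^2$ acting by $(\lambda,\mu)\cdot(t_1,t_2,x_1,x_2)=(\lambda t_1,\lambda t_2,\mu\lambda^{-\eta}x_1,\mu x_2)$; each of its $(q+1)^2$ $\mathbb{F}_q$-points $P$ has a unique representative of the form $(1,a,1,b)$, $(0,1,1,b)$, $(1,a,0,1)$ or $(0,1,0,1)$ ($a,b\in\mathbb{F}_q$), and $F(P)$ is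 $F$ evaluated there. $\mathrm{ev}_{(\delta_T,\delta_X)}(F)=(F(P))_{P\in\mathcal{H}_\eta(\mathbb{F}_q)}$. *)

From HB Require Import structures.
From mathcomp Require Import all_boot all_order all_algebra all_field.
Set Implicit Arguments. Unset Strict Implicit. Unset Printing Implicit Defensive.
Import Order.TTheory GRing.Theory Num.Theory.
Local Open Scope ring_scope.

(* A monomial T1^c1 T2^c2 X1^d1 X2^d2 of R = F_q[T1,T2,X1,X2] is identified
   with its exponent vector (c1,c2,d1,d2). *)

Definition bideg (eta c1 c2 d1 d2 : nat) : int * nat :=
  ((c1 + c2)%:Z - (eta * d1)%:Z, (d1 + d2)%N).

(* F_q-points of the Hirzebruch surface, via their normalized representatives:
   first component  Some a -> (t1,t2) = (1,a),  None -> (t1,t2) = (0,1);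
   second component Some b -> (x1,x2) = (1,b),  None -> (x1,x2) = (0,1). *)
Definition hpoint (F : finFieldType) : finType := (option F * option F)%type.

Definition repT (F : finFieldType) (o : option F) : F * F :=
  if o is Some a then (1, a) else (0, 1).
Definition repX (F : finFieldType) (o : option F) : F * F :=
  if o is Some b then (1, b) else (0, 1).

(* Value of the monomial at the normalized representative of P
   (with the usual convention 0^0 = 1). *)
Definition mono_at (F : finFieldType) (c1 c2 d1 d2 : nat) (P : hpoint F) : F :=
  let t := repT P.1 in let x := repX P.2 in
  t.1 ^+ c1 * t.2 ^+ c2 * x.1 ^+ d1 * x.2 ^+ d2.

Definition ev_mono (F : finFieldType) (c1 c2 d1 d2 : nat) : {ffun hpoint F -> F} :=
  [ffun P => mono_at c1 c2 d1 d2 P].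

From HB Require Import structures.
From mathcomp Require Import all_boot all_order all_algebra all_field.
From mathcomp Require Import cyclic.
From mathcomp Require Import zify.
Import Order.TTheory GRing.Theory Num.Theory.
Local Open Scope ring_scope.

(* Two power maps a |-> a^n and a |-> a^m agree on F_q iff n = m mod q - 1
   (test on a generator of the cyclic group F_q^* ) and n, m vanish together
   (test at a = 0).  Evaluating at the points (1,a,1,1), (1,1,1,a), (0,1,1,1)
   and (1,1,0,1) gives these conditions for c2, d2 and the vanishing ones for
   c1, d1; the divisibilities for d1 and c1 then follow from the bidegree
   equations d1 + d2 = d1' + d2' and c1 + c2 - eta d1 = c1' + c2' - eta d1'. *)

Section FinFieldPowers.

Variable F : finFieldType.

Lemma expf_card_pred (x : F) : x != 0 -> x ^+ #|F|.-1 = 1.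
Proof.
move=> x_neq0; apply: (mulfI x_neq0); rewrite mulr1 -exprS.
by rewrite prednK ?expf_card // (ltn_trans _ (finNzRing_gt1 F)).
Qed.

Lemma finField_prim_root : exists z : F, #|F|.-1.-primitive_root z.
Proof.
have q1_gt0 : (0 < #|F|.-1)%N by rewrite -subn1 subn_gt0 finNzRing_gt1.
have /hasP[z _ prim_z] : has #|F|.-1.-primitive_root (enum (predC1 (0 : F))).
  apply: has_prim_root q1_gt0 _ (enum_uniq _) _; last by rewrite -cardE cardC1.
  by apply/allP => x; rewrite mem_enum unity_rootE => /expf_card_pred ->.
by exists z.
Qed.

Lemma eq_expr0n (n m : nat) :
  (0 : F) ^+ n = 0 ^+ m <-> (n == 0%N) = (m == 0%N).
Proof.
rewrite !expr0n; case: n => [|n]; case: m => [|m] //; split=> // /eqP.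
  by rewrite oner_eq0.
by rewrite eq_sym oner_eq0.
Qed.

Lemma eq_exprn_funP (n m : nat) :
  (forall a : F, a ^+ n = a ^+ m) <->
  ((#|F| - 1)%:Z %| n%:Z - m%:Z)%Z /\ (n == 0%N) = (m == 0%N).
Proof.
have modE : (n == m %[mod #|F|.-1])%N = ((#|F| - 1)%:Z %| n%:Z - m%:Z)%Z.
  by rewrite -eqz_mod_dvd /= !modz_nat eqz_nat subn1.
rewrite -modE; split=> [eq_nm | [/eqP eq_mod zero_nm] a].
  have [z prim_z] := finField_prim_root.
  rewrite -(eq_prim_root_expr prim_z) eq_nm eqxx; split=> //.
  exact/eq_expr0n.
have [->|a_neq0] := eqVneq a 0; first exact/eq_expr0n.
rewrite (divn_eq n #|F|.-1) (divn_eq m #|F|.-1) eq_mod !exprD.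
by rewrite !(mulnC _ #|F|.-1) !exprM expf_card_pred // !expr1n.
Qed.

End FinFieldPowers.

Lemma ev_mono_eqP (F : finFieldType) (c1 c2 d1 d2 c1' c2' d1' d2' : nat) :
  ev_mono F c1 c2 d1 d2 = ev_mono F c1' c2' d1' d2' <->
  forall P : hpoint F, mono_at c1 c2 d1 d2 P = mono_at c1' c2' d1' d2' P.
Proof.
by rewrite -ffunP; split=> eq_ev P; have := eq_ev P; rewrite !ffunE.
Qed.

Lemma mono_at_eq_exprs (F : finFieldType) (c1 c2 d1 d2 c1' c2' d1' d2' : nat) :
  (forall P : hpoint F, mono_at c1 c2 d1 d2 P = mono_at c1' c2' d1' d2' P) ->
  [/\ forall a : F, a ^+ c2 = a ^+ c2',
      forall a : F, a ^+ d2 = a ^+ d2',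
      (c1 == 0%N) = (c1' == 0%N) & (d1 == 0%N) = (d1' == 0%N)].
Proof.
move=> eq_mono; split.
- move=> a; have := eq_mono (Some a, Some 1).
  by rewrite /mono_at /= !expr1n !mul1r !mulr1.
- move=> a; have := eq_mono (Some 1, Some a).
  by rewrite /mono_at /= !expr1n !mul1r.
- apply/(eq_expr0n F).
  by have := eq_mono (None, Some 1); rewrite /mono_at /= !expr1n !mulr1.
- apply/(eq_expr0n F).
  by have := eq_mono (Some 1, None); rewrite /mono_at /= !expr1n !mulr1 !mul1r.
Qed.

Lemma bideg_eq_sub (eta c1 c2 d1 d2 c1' c2' d1' d2' : nat) :
  bideg eta c1 c2 d1 d2 = bideg eta c1' c2' d1' d2' ->
  d1%:Z - d1'%:Z = - (d2%:Z - d2'%:Z) /\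
  c1%:Z - c1'%:Z = - (c2%:Z - c2'%:Z) + eta%:Z * (d1%:Z - d1'%:Z).
Proof. by rewrite /bideg => -[eqT eqX]; split; lia. Qed.

Theorem proposition2p7 (F : finFieldType) (eta : nat) (dT : int) (dX : nat)
    (c1 c2 d1 d2 c1' c2' d1' d2' : nat) :
  0 <= dT + (eta * dX)%:Z ->
  bideg eta c1 c2 d1 d2 = (dT, dX) ->
  bideg eta c1' c2' d1' d2' = (dT, dX) ->
  (ev_mono F c1 c2 d1 d2 = ev_mono F c1' c2' d1' d2' <->
   [/\ (((#|F| - 1)%:Z %| d1%:Z - d1'%:Z)%Z /\ ((#|F| - 1)%:Z %| d2%:Z - d2'%:Z)%Z),
       (((#|F| - 1)%:Z %| c1%:Z - c1'%:Z)%Z /\ ((#|F| - 1)%:Z %| c2%:Z - c2'%:Z)%Z),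
       ((d1 == 0%N) = (d1' == 0%N) /\ (d2 == 0%N) = (d2' == 0%N)) &
       ((c1 == 0%N) = (c1' == 0%N) /\ (c2 == 0%N) = (c2' == 0%N))]).
Proof.
move=> _ deg deg'; move: (etrans deg (esym deg')) => /bideg_eq_sub[subd1 subc1].
rewrite ev_mono_eqP; split.
- case/mono_at_eq_exprs => /eq_exprn_funP[dvd_c2 zero_c2].
  move=> /eq_exprn_funP[dvd_d2 zero_d2] zero_c1 zero_d1.
  have dvd_d1 : ((#|F| - 1)%:Z %| d1%:Z - d1'%:Z)%Z by rewrite subd1 rpredN.
  by split; split; rewrite // subc1 rpredD ?rpredN ?dvdz_mull.
- case=> [[dvd_d1 dvd_d2] [dvd_c1 dvd_c2] [zero_d1 zero_d2] [zero_c1 zero_c2]] P.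
  rewrite /mono_at; congr (_ * _ * _ * _).
  all: by apply: (iffRL (eq_exprn_funP F _ _)).
Qed.
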